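(* Let $\mathcal{A}\in\mathbb{R}^{m\times n\times p}$, $\mathcal{B}\in\mathbb{R}^{m\times l\times p}$, let $T\subset\mathcal{P}([n])$ be a finite collection of column blocks such that $\mathcal{A}_{:\tau:}^*\mathcal{A}_{:\tau:}$ is invertible for every $\tau\in T$, and let $\mathcal{D}(T)$ be a probability distribution on $T$. Let $\mathcal{X}^{(k)}$ be the iterates of the TRBGS method (defined in the context) started from a fixed initial tensor $\mathcal{X}^{(0)}\in\mathbb{R}^{n\times l\times p}$, where the blocks $\tau_1,\tau_2,\dots$ are sampled independently from $\mathcal{D}(T)$. For $\tau\in T$ let $\mathcal{P}_{\mathcal{A}_{:\tau:}}:=\mathcal{A}_{:\tau:}(\mathcal{A}_{:\tau:}^*\mathcal{A}_{:\tau:})^{-1}\mathcal{A}_{:\tau:}^*$, and let $\mathcal{X}^\ddagger$ be a minimizer of $\|\mathcal{A}\mathcal{X}-\mathcal{B}\|_F^2$ over $\mathcal{X}\in\mathbb{R}^{n\times l\times p}$. Set $$\alpha_{\mathcal{A}}=1-\sigma_{\min}\big(\mathbb{E}_{\tau\sim\mathcal{D}(T)}[\mathrm{bcirc}(\mathcal{P}_{\mathcal{A}_{:\tau:}})]\big).$$ Then for every $k\ge 0$, $$\mathbb{E}\big[\|\mathcal{A}\mathcal{X}^{(k)}-\mathcal{A}\mathcal{X}^\ddagger\|_F^2\,\big|\,\mathcal{X}^{(0)}\big]\le \alpha_{\mathcal{A}}^k\,\|\mathcal{A}\mathcal{X}^{(0)}-\mathcal{A}\mathcal{X}^\ddagger\|_F^2.$$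 If, in addition, the system $\mathcal{A}\mathcal{X}=\mathcal{A}\mathcal{X}^\ddagger$ has the unique solution $\mathcal{X}=\mathcal{X}^\ddagger$, then for every $k\ge0$, $$\mathbb{E}\big[\|\mathcal{X}^{(k)}-\mathcal{X}^\ddagger\|_F^2\,\big|\,\mathcal{X}^{(0)}\big]\le \kappa^2(\mathcal{A})\,\alpha_{\mathcal{A}}^k\,\|\mathcal{X}^{(0)}-\mathcal{X}^\ddagger\|_F^2,$$ where $\kappa^2(\mathcal{A}):=\sigma_{\max}^2(\mathrm{bcirc}(\mathcal{A}^\dagger))\,\sigma_{\max}^2(\mathrm{bcirc}(\mathcal{A}))$. The expectations are over the random blocks.
   Context: All tensors are real third-order arrays. For $\mathcal{A}\in\mathbb{R}^{m\times n\times p}$ with frontal slices $\mathcal{A}_1,\dots,\mathcal{A}_p\in\mathbb{R}^{m\times n}$, $\mathrm{bcirc}(\mathcal{A})\in\mathbb{R}^{mp\times np}$ is the block-circulant matrix whose $(i,j)$ block ($i,j\in[p]$) is $\mathcal{A}_{((i-j)\bmod p)+1}$ (so its first block column is $\mathcal{A}_1,\mathcal{A}_2,\dots,\mathcal{A}_p$). For $\mathcal{B}\in\mathbb{R}^{n\times l\times p}$, $\mathrm{unfold}(\mathcal{B})\in\mathbb{R}^{np\times l}$ stacks the frontal slices $\mathcal{B}_1,\dots,\mathcal{B}_p$ vertically, and $\mathrm{fold}$ is its inverse. The t-product is $\mathcal{A}\mathcal{B}=\mathrm{fold}(\mathrm{bcirc}(\mathcal{A})\,\mathrm{unfold}(\mathcal{B}))\in\mathbb{R}^{m\times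 l\times p}$. The transpose $\mathcal{A}^*\in\mathbb{R}^{n\times m\times p}$ is obtained by transposing each frontal slice and reversing the order of the transposed slices $2$ through $p$ (so $\mathrm{bcirc}(\mathcal{A}^* )=\mathrm{bcirc}(\mathcal{A})^\top$). The identity tensor $\mathcal{I}\in\mathbb{R}^{n\times n\times p}$ has first frontal slice $I_n$ and all other slices zero; $\mathcal{C}$ is the inverse of a square tensor $\mathcal{A}$ if $\mathcal{A}\mathcal{C}=\mathcal{C}\mathcal{A}=\mathcal{I}$. The pseudoinverse $\mathcal{A}^\dagger$ is the tensor with $\mathrm{bcirc}(\mathcal{A}^\dagger)=\mathrm{bcirc}(\mathcal{A})^\dagger$ (Moore–Penrose pseudoinverse). $\|\cdot\|_F$ is the Frobenius norm (square root of the sum of squares of all entries). $\sigma_{\min}(\mathbf{M}),\sigma_{\max}(\mathbf{M})$ are the smallest and largest singular values of a matrix $\mathbf{M}$. For $\tau\subset[n]$, $\mathcal{A}_{:\tau:}\in\mathbb{R}^{m\times|\tau|\times p}$ consists of the lateral slices (columns) of $\mathcal{A}$ indexed by $\tau$, and $\mathcal{E}_\tau\in\mathbb{R}^{n\times|\tau|\times p}$ is the tensor whose first frontal slice consists of the columns of $I_n$ indexed by $\tau$ and whose other frontal slices are zero (so $\mathcal{A}\mathcal{E}_\tau=\mathcal{A}_{:\tau:}$). $\mathcal{P}([n])$ is the power set of $[n]=\{1,\dots,n\}$. TRBGS method: given $\mathcal{X}^{(0)}$, for $k=1,2,\dots$ sample $\tau_k$ and set $\mathcal{X}^{(k)}=\mathcal{X}^{(k-1)}-\mathcal{E}_{\tau_k}(\mathcal{A}_{:\tau_k:}^*\mathcal{A}_{:\tau_k:})^{-1}\mathcal{A}_{:\tau_k:}^*(\mathcal{A}\mathcal{X}^{(k-1)}-\mathcal{B})$.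 *)

From HB Require Import structures.
From mathcomp Require Import all_boot all_order all_algebra.
From mathcomp Require Import boolp classical_sets reals.
Set Implicit Arguments. Unset Strict Implicit. Unset Printing Implicit Defensive.
Import Order.TTheory GRing.Theory Num.Theory.
Local Open Scope ring_scope.

(* Frontal slices are indexed 0..p-1 (slice k+1 of the paper is index k). *)
Definition tensor (R : Type) (m n p : nat) := 'I_p -> 'M[R]_(m, n).

Lemma ord_pos p (i : 'I_p) : (0 < p)%N.
Proof. by apply: leq_ltn_trans (ltn_ord i). Qed.

(* the element (x mod p) of 'I_p (p > 0 is witnessed by i) *)
Definition ord_mod p (x : nat) (i : 'I_p) : 'I_p := Ordinal (ltn_pmod x (ord_pos i)).
Definition ord_sub p (i j : 'I_p) : 'I_p := ord_mod (i + p - j) i.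
Definition ord_neg p (k : 'I_p) : 'I_p := ord_mod (p - k) k.

Section Tensors.
Variable R : realType.

Definition bcirc m n p (A : tensor R m n p) :
  'M[R]_(\sum_(i < p) m, \sum_(j < p) n) :=
  @mxblock R p p (fun _ => m) (fun _ => n) (fun i j => A (ord_sub i j)).

Definition tunfold n l p (B : tensor R n l p) : 'M[R]_(\sum_(i < p) n, l) :=
  @mxcol R p (fun _ => n) l (fun i => B i).

Definition tfold n l p (M : 'M[R]_(\sum_(i < p) n, l)) : tensor R n l p :=
  fun i => @submxcol R p (fun _ => n) l M i.

Definition tprod m n l p (A : tensor R m n p) (B : tensor R n l p) : tensor R m l p :=
  tfold (bcirc A *m tunfold B).

Definition tstar m n p (A : tensor R m n p) : tensor R n m p :=
  fun k => (A (ord_neg k))^T.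

Definition tadd m n p (A B : tensor R m n p) : tensor R m n p := fun k => A k + B k.
Definition tsub m n p (A B : tensor R m n p) : tensor R m n p := fun k => A k - B k.

Definition tid n p : tensor R n n p :=
  fun k => if (k == 0 :> nat) then 1%:M else 0.
Arguments tid n p : clear implicits.

Definition is_tinv n p (A C : tensor R n n p) : Prop :=
  tprod A C = tid n p /\ tprod C A = tid n p.

Definition tinvertible n p (A : tensor R n n p) : Prop := exists C, is_tinv A C.

(* the inverse (chosen classically; meaningful when A is invertible) *)
Definition tinv n p (A : tensor R n n p) : tensor R n n p :=
  match pselect (tinvertible A) with
  | left H => projT1 (cid H)
  | right _ => A
  end.

Definition tfro m n p (A : tensor R m n p) : R :=
  Num.sqrt (\sum_(k < p) \sum_(i < m) \sum_(j < n) (A k i j) ^+ 2).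

(* lateral slices indexed by tau (in increasing order) *)
Definition tcols m n p (A : tensor R m n p) (tau : {set 'I_n}) : tensor R m #|tau| p :=
  fun k => colsub (fun c : 'I_#|tau| => @enum_val _ (mem tau) c) (A k).

Definition tE n p (tau : {set 'I_n}) : tensor R n #|tau| p :=
  fun k => if (k == 0 :> nat) then colsub (fun c : 'I_#|tau| => @enum_val _ (mem tau) c) 1%:M
           else 0.
Arguments tE n p tau : clear implicits.

Definition tproj m n p (A : tensor R m n p) (tau : {set 'I_n}) : tensor R m m p :=
  let At := tcols A tau in tprod At (tprod (tinv (tprod (tstar At) At)) (tstar At)).

Definition trbgs_step m n l p (A : tensor R m n p) (B : tensor R m l p)
  (X : tensor R n l p) (tau : {set 'I_n}) : tensor R n l p :=
  let At := tcols A tau in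
  tsub X (tprod (tE n p tau)
           (tprod (tinv (tprod (tstar At) At))
                  (tprod (tstar At) (tsub (tprod A X) B)))).

Definition trbgs_iter m n l p (A : tensor R m n p) (B : tensor R m l p)
  (X0 : tensor R n l p) (s : seq {set 'I_n}) : tensor R n l p :=
  foldl (trbgs_step A B) X0 s.

Definition iid_expect n (T : {set {set 'I_n}}) (D : {set 'I_n} -> R) (k : nat)
  (f : seq {set 'I_n} -> R) : R :=
  \sum_(t : k.-tuple {set 'I_n} | all (fun tau => tau \in T) t)
     (\prod_(tau <- t) D tau) * f t.

Definition sigma_max a b (M : 'M[R]_(a, b)) : R :=
  Num.sqrt (sup [set lam : R | eigenvalue (M^T *m M) lam]).
Definition sigma_min a b (M : 'M[R]_(a, b)) : R :=
  Num.sqrt (inf [set lam : R | eigenvalue (M^T *m M) lam]).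

Definition is_mp_pinv a b (M : 'M[R]_(a, b)) (X : 'M[R]_(b, a)) : Prop :=
  [/\ M *m X *m M = M, X *m M *m X = X, (M *m X)^T = M *m X & (X *m M)^T = X *m M].

Definition mp_pinv a b (M : 'M[R]_(a, b)) : 'M[R]_(b, a) :=
  match pselect (exists X, is_mp_pinv M X) with
  | left H => projT1 (cid H)
  | right _ => 0
  end.

(* kappa^2(A) = sigma_max^2(bcirc(A^dagger)) sigma_max^2(bcirc(A)),
   where by definition bcirc(A^dagger) = bcirc(A)^dagger *)
Definition kappa2 m n p (A : tensor R m n p) : R :=
  sigma_max (mp_pinv (bcirc A)) ^+ 2 * sigma_max (bcirc A) ^+ 2.

Definition alphaA m n p (A : tensor R m n p) (T : {set {set 'I_n}}) (D : {set 'I_n} -> R) : R :=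
  1 - sigma_min (\sum_(tau in T) D tau *: bcirc (tproj A tau)).

End Tensors.

(* The t-product is multiplication by block-circulant matrices, so after unfolding,
   TRBGS is randomized block Gauss-Seidel for the matrix [bcirc A].  By the normal
   equations of the least-squares solution, one step with block [tau] maps the
   residual error [e = bcirc A (x - x‡)] to [e - P e], where [P = bcirc P_tau] is an
   orthogonal projection, so [|e - P e|^2 = |e|^2 - tr (e^T P e)].  Averaging over
   [tau] gives [|e|^2 - tr (e^T E[P] e) <= (1 - sigma_min E[P]) |e|^2], because the
   smallest eigenvalue of the symmetric positive semidefinite matrix [E[P]] is the
   infimum of its Rayleigh quotient.  When
   [A X = A X‡] has only the solution [X‡], [bcirc A] is injective, hence
   [x - x‡ = (bcirc A)^dagger e], which costs a factor [sigma_max^2 ((bcirc A)^dagger)],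
   while [|e|^2 <= sigma_max^2 (bcirc A) |x - x‡|^2] at the start. *)

From HB Require Import structures.
From mathcomp Require Import all_boot all_order all_algebra.
From mathcomp Require Import boolp classical_sets reals.
From mathcomp.algebra_tactics Require Import ring lra.
Set Implicit Arguments. Unset Strict Implicit. Unset Printing Implicit Defensive.
Import Order.TTheory GRing.Theory Num.Theory.
Local Open Scope ring_scope.

Lemma discriminant_le (R : realFieldType) (x y z : R) : 0 <= z ->
  (forall t, 0 <= x + 2 * t * y + t ^+ 2 * z) -> y ^+ 2 <= x * z.
Proof.
move=> z0 H.
have [z_eq0 | z_neq0] := eqVneq z 0.
  have [-> | y_neq0] := eqVneq y 0; first by rewrite expr0n z_eq0 mulr0.
  have := H (- ((x + 1) / (2 * y))); rewrite z_eq0 mulr0 addr0.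
  have -> : 2 * - ((x + 1) / (2 * y)) * y = - (x + 1) by field.
  lra.
have zp : 0 < z by rewrite lt_neqAle eq_sym z_neq0.
have := H (- (y / z)).
have yz : z * (y / z) = y by field.
move: (y / z) yz => w <-; nra.
Qed.

Section Forms.
Variable R : realFieldType.
Implicit Types N : nat.

Definition bform N (M : 'M[R]_N) (u v : 'rV[R]_N) : R := (u *m M *m v^T) 0 0.
Definition qform N (M : 'M[R]_N) (v : 'rV[R]_N) : R := bform M v v.
Definition sqnorm N (v : 'rV[R]_N) : R := (v *m v^T) 0 0.

Lemma sqnormE N (v : 'rV[R]_N) : sqnorm v = \sum_i v 0 i ^+ 2.
Proof. by rewrite /sqnorm mxE; apply: eq_bigr => i _; rewrite mxE expr2. Qed.

Lemma sqnorm_ge0 N (v : 'rV[R]_N) : 0 <= sqnorm v.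
Proof. by rewrite sqnormE; apply: sumr_ge0 => i _; apply: sqr_ge0. Qed.

Lemma sqnorm_eq0 N (v : 'rV[R]_N) : sqnorm v = 0 -> v = 0.
Proof.
rewrite sqnormE => /eqP; rewrite psumr_eq0 => [/allP v0|i _]; last exact: sqr_ge0.
apply/rowP => i; rewrite mxE; apply/eqP; rewrite -sqrf_eq0.
exact: v0 (mem_index_enum i).
Qed.

Lemma sqnorm0 N : sqnorm (0 : 'rV[R]_N) = 0.
Proof. by rewrite /sqnorm mul0mx mxE. Qed.

Lemma qformv0 N (M : 'M[R]_N) : qform M 0 = 0.
Proof. by rewrite /qform /bform !mul0mx mxE. Qed.

Lemma sqnorm_gt0 N (v : 'rV[R]_N) : v != 0 -> 0 < sqnorm v.
Proof.
move=> v_neq0; rewrite lt_neqAle sqnorm_ge0 andbT eq_sym.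
by apply: contra v_neq0 => /eqP/sqnorm_eq0->.
Qed.

Lemma sqr_coord_le_sqnorm N (v : 'rV[R]_N) i : v 0 i ^+ 2 <= sqnorm v.
Proof.
by rewrite sqnormE (bigD1 i) //= lerDl; apply: sumr_ge0 => j _; apply: sqr_ge0.
Qed.

Lemma sqnorm_const1_gt0 N : 0 < sqnorm (const_mx 1 : 'rV[R]_N.+1).
Proof.
apply: lt_le_trans (sqr_coord_le_sqnorm _ ord0).
by rewrite mxE expr1n ltr01.
Qed.

Lemma qformE N (M : 'M[R]_N) v : qform M v = \sum_i \sum_j v 0 i * M i j * v 0 j.
Proof.
rewrite /qform /bform mxE exchange_big; apply: eq_bigr => i _.
by rewrite mxE big_distrl; apply: eq_bigr => j _; rewrite !mxE.
Qed.

Lemma norm_qform_le N (M : 'M[R]_N) v :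
  `|qform M v| <= (\sum_i \sum_j `|M i j|) * sqnorm v.
Proof.
rewrite qformE big_distrl; apply: le_trans (ler_norm_sum _ _ _) _.
apply: ler_sum => i _; rewrite big_distrl; apply: le_trans (ler_norm_sum _ _ _) _.
apply: ler_sum => j _; rewrite !normrM.
rewrite (_ : _ * _ * _ = `|M i j| * (`|v 0 i| * `|v 0 j|)); last by ring.
apply: ler_wpM2l => //.
have vi := sqr_coord_le_sqnorm v i; have vj := sqr_coord_le_sqnorm v j.
rewrite -real_normK ?num_real // in vi; rewrite -real_normK ?num_real // in vj.
have := normr_ge0 (v 0 i); have := normr_ge0 (v 0 j); nra.
Qed.

Lemma bform_sym N (M : 'M[R]_N) u v : M^T = M -> bform M u v = bform M v u.
Proof.
move=> MT; rewrite /bform -[in LHS](trmxK (u *m M *m v^T)) [in LHS]mxE.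
by rewrite !trmx_mul trmxK MT mulmxA.
Qed.

Lemma qform_tr N (M : 'M[R]_N) v : qform M^T v = qform M v.
Proof.
rewrite /qform /bform -[in LHS](trmxK (v *m M^T *m v^T)) [in LHS]mxE.
by rewrite !trmx_mul !trmxK mulmxA.
Qed.

Lemma qformD N (M1 M2 : 'M[R]_N) v : qform (M1 + M2) v = qform M1 v + qform M2 v.
Proof. by rewrite /qform /bform mulmxDr mulmxDl mxE. Qed.

Lemma qformN N (M : 'M[R]_N) v : qform (- M) v = - qform M v.
Proof. by rewrite /qform /bform mulmxN mulNmx mxE. Qed.

Lemma qform_scalar N (c : R) (v : 'rV[R]_N) : qform c%:M v = c * sqnorm v.
Proof. by rewrite /qform /bform mul_mx_scalar -scalemxAl mxE. Qed.

Lemma qform_sum N (I : finType) (P : pred I) (F : I -> 'M[R]_N) (w : I -> R) v :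
  qform (\sum_(i | P i) w i *: F i) v = \sum_(i | P i) w i * qform (F i) v.
Proof.
rewrite /qform /bform mulmx_sumr mulmx_suml summxE; apply: eq_bigr => i _.
by rewrite -scalemxAr -scalemxAl mxE.
Qed.

Lemma qform_gram a b (M : 'M[R]_(a, b)) u : qform (M^T *m M) u = sqnorm (u *m M^T).
Proof. by rewrite /qform /bform /sqnorm trmx_mul trmxK !mulmxA. Qed.

Lemma qform_eigen N (M : 'M[R]_N) lam u :
  u *m M = lam *: u -> qform M u = lam * sqnorm u.
Proof. by move=> uM; rewrite /qform /bform uM -scalemxAl mxE. Qed.

Lemma qform_addZ N (M : 'M[R]_N) u v t : M^T = M ->
  qform M (u + t *: v) = qform M u + 2 * t * bform M u v + t ^+ 2 * qform M v.
Proof.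
move=> MT; have vu := bform_sym v u MT; rewrite /qform /bform in vu *.
rewrite linearD /= linearZ /= !mulmxDl !mulmxDr -!scalemxAl -!scalemxAr.
have mxDE (A B : 'M[R]_1) : (A + B) 0 0 = A 0 0 + B 0 0 by rewrite mxE.
have mxZE c (A : 'M[R]_1) : (c *: A) 0 0 = c * A 0 0 by rewrite mxE.
rewrite !(mxDE, mxZE) vu; ring.
Qed.

Lemma cauchy_schwarz_psd N (M : 'M[R]_N) : M^T = M -> (forall v, 0 <= qform M v) ->
  forall u v, bform M u v ^+ 2 <= qform M u * qform M v.
Proof.
move=> MT M_psd u v; apply: discriminant_le => // t.
by rewrite -qform_addZ.
Qed.

Lemma gram_eigenvalue_ge0 a b (M : 'M[R]_(a, b)) lam :
  eigenvalue (M^T *m M) lam -> 0 <= lam.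
Proof.
case/eigenvalueP => u /qform_eigen uM /sqnorm_gt0 u_gt0.
by rewrite -(pmulr_lge0 _ u_gt0) -uM qform_gram sqnorm_ge0.
Qed.

Lemma eigenvalue_le_sum_norm N (M : 'M[R]_N) lam :
  eigenvalue M lam -> lam <= \sum_i \sum_j `|M i j|.
Proof.
case/eigenvalueP => u /qform_eigen uM /sqnorm_gt0 u_gt0.
by rewrite -(ler_pM2r u_gt0) -uM (le_trans (ler_norm _)) ?norm_qform_le.
Qed.

Lemma psd_unit_coercive N (Q : 'M[R]_N) : Q^T = Q -> (forall v, 0 <= qform Q v) ->
  Q \in unitmx -> exists2 c, 0 < c & forall v, c * sqnorm v <= qform Q v.
Proof.
move=> QT Q_psd Qu; set K := \sum_i \sum_j `|invmx Q i j|.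
have K_ge0 : 0 <= K by apply: sumr_ge0 => i _; apply: sumr_ge0.
exists (K + 1)^-1 => [|v]; first by rewrite invr_gt0; lra.
have [-> | v_neq0] := eqVneq v 0; first by rewrite sqnorm0 mulr0 Q_psd.
rewrite ler_pdivrMl; last lra.
(* Cauchy-Schwarz for [Q] at [v Q^-1] and [v]: |v|^4 <= <v Q^-1, v> <v Q, v>. *)
have vQK : v *m invmx Q *m Q = v by rewrite mulmxKV.
have bE : bform Q (v *m invmx Q) v = sqnorm v by rewrite /bform vQK.
have qE : qform Q (v *m invmx Q) = qform (invmx Q) v.
  by rewrite -[RHS]qform_tr /qform /bform vQK trmx_mul mulmxA.
have := cauchy_schwarz_psd QT Q_psd (v *m invmx Q) v; rewrite bE qE.
have := le_trans (ler_norm _) (norm_qform_le (invmx Q) v); rewrite -/K.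
have := sqnorm_gt0 v_neq0; have := Q_psd v; nra.
Qed.

Lemma rayleigh_inf_eigenvalue N (M : 'M[R]_N) c : M^T = M ->
  (forall v, c * sqnorm v <= qform M v) ->
  (forall e, 0 < e -> exists2 v, 0 < sqnorm v & qform M v < (c + e) * sqnorm v) ->
  eigenvalue M c.
Proof.
move=> MT M_ge M_adh; apply: contraT => not_eig; exfalso.
set Q := M - c%:M.
have qQ v : qform Q v = qform M v - c * sqnorm v by rewrite qformD qformN qform_scalar.
have QT : Q^T = Q by rewrite /Q linearB /= tr_scalar_mx MT.
have Q_psd v : 0 <= qform Q v by rewrite qQ subr_ge0.
have Qu : Q \in unitmx.
  by rewrite -row_free_unit -kermx_eq0; move: not_eig; rewrite negbK.
have [e e_gt0 Q_ge] := psd_unit_coercive QT Q_psd Qu.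
have [v _] := M_adh e e_gt0; have := Q_ge v; rewrite qQ mulrDl; lra.
Qed.

End Forms.

Section Frobenius.
Variable R : realFieldType.

Definition frob2 a b (M : 'M[R]_(a, b)) : R := \tr (M^T *m M).

Lemma frob2E a b (M : 'M[R]_(a, b)) : frob2 M = \sum_i \sum_j M i j ^+ 2.
Proof.
rewrite /frob2 /mxtrace exchange_big; apply: eq_bigr => j _.
by rewrite mxE; apply: eq_bigr => i _; rewrite mxE expr2.
Qed.

Lemma trace_qform_cols a c (M : 'M[R]_a) (e : 'M[R]_(a, c)) :
  \tr (e^T *m M *m e) = \sum_j qform M (row j e^T).
Proof.
rewrite /mxtrace; apply: eq_bigr => j _; rewrite /qform /bform !mxE.
apply: eq_bigr => k _; rewrite !mxE.
by congr (_ * _); apply: eq_bigr => i _; rewrite !mxE.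
Qed.

Lemma frob2_cols a c (e : 'M[R]_(a, c)) : frob2 e = \sum_j sqnorm (row j e^T).
Proof.
rewrite /frob2 -{1}(mulmx1 e^T) trace_qform_cols.
by apply: eq_bigr => j _; rewrite /qform /bform mulmx1.
Qed.

Lemma frob2_ge0 a b (M : 'M[R]_(a, b)) : 0 <= frob2 M.
Proof. by rewrite frob2_cols; apply: sumr_ge0 => j _; apply: sqnorm_ge0. Qed.

Lemma frob2_eq0 a b (M : 'M[R]_(a, b)) : frob2 M = 0 -> M = 0.
Proof.
rewrite frob2_cols => /eqP; rewrite psumr_eq0 => [/allP M0|j _]; last exact: sqnorm_ge0.
apply/matrixP => i j; have /eqP/sqnorm_eq0/rowP/(_ i) := M0 j (mem_index_enum j).
by rewrite !mxE.
Qed.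

Lemma frob2_addZ a b (M N : 'M[R]_(a, b)) t :
  frob2 (M + t *: N) = frob2 M + 2 * t * \tr (M^T *m N) + t ^+ 2 * frob2 N.
Proof.
rewrite /frob2 (_ : (M + t *: N)^T = M^T + t *: N^T); last by rewrite linearD /= linearZ.
rewrite mulmxDl !mulmxDr -!scalemxAl -!scalemxAr.
rewrite !raddfD /= !mxtraceZ -[\tr (N^T *m M)]mxtrace_tr trmx_mul trmxK; ring.
Qed.

Lemma trace_qform_ge a c (M : 'M[R]_a) s : (forall v, s * sqnorm v <= qform M v) ->
  forall e : 'M[R]_(a, c), s * frob2 e <= \tr (e^T *m M *m e).
Proof.
move=> M_ge e; rewrite frob2_cols trace_qform_cols mulr_sumr.
by apply: ler_sum => j _; apply: M_ge.
Qed.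

Lemma frob2_sub_proj a c (P : 'M[R]_a) (e : 'M[R]_(a, c)) : P^T = P -> P *m P = P ->
  frob2 (e - P *m e) = frob2 e - \tr (e^T *m P *m e).
Proof.
move=> PT PP; rewrite /frob2 (_ : (e - P *m e)^T = e^T - e^T *m P); last first.
  by rewrite linearB /= trmx_mul PT.
rewrite mulmxBl !mulmxBr !mulmxA.
by rewrite -(mulmxA e^T P P) PP subrr subr0 raddfB.
Qed.

Lemma proj_qform_ge0 N (P : 'M[R]_N) v : P^T = P -> P *m P = P -> 0 <= qform P v.
Proof. by move=> PT PP; rewrite -PP -{1}PT qform_gram sqnorm_ge0. Qed.

Lemma proj_qform_le N (P : 'M[R]_N) v : P^T = P -> P *m P = P -> qform P v <= sqnorm v.
Proof.
move=> PT PP; set Q := 1%:M - P.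
have QT : Q^T = Q by rewrite /Q linearB /= trmx1 PT.
have QQ : Q *m Q = Q by rewrite /Q mulmxBl !mulmxBr !mul1mx mulmx1 PP subrr subr0.
have := proj_qform_ge0 v QT QQ.
by rewrite /Q qformD qformN qform_scalar mul1r subr_ge0.
Qed.

Lemma normal_equation a b c (M : 'M[R]_(a, b)) (y : 'M[R]_(b, c)) (g : 'M[R]_(a, c)) :
  (forall z, frob2 (M *m y - g) <= frob2 (M *m z - g)) -> M^T *m (M *m y - g) = 0.
Proof.
move=> y_min; set d := M^T *m (M *m y - g).
have quad t : 0 <= 0 + 2 * t * frob2 d + t ^+ 2 * frob2 (M *m d).
  have := y_min (y + t *: d).
  rewrite mulmxDr -scalemxAr addrAC frob2_addZ -addrA lerDl add0r.
  by rewrite [\tr _](_ : _ = frob2 d) // /frob2 /d trmx_mul trmxK !mulmxA.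
have := discriminant_le (frob2_ge0 (M *m d)) quad; rewrite mul0r => d2_le0.
by apply: frob2_eq0; apply/eqP; rewrite -sqrf_eq0 eq_le d2_le0 sqr_ge0.
Qed.

End Frobenius.

Section SingularValues.
Variable R : realType.
Local Open Scope classical_set_scope.

Lemma sym_min_eigenvalue N (M : 'M[R]_N.+1) : M^T = M ->
  exists2 c, eigenvalue M c & forall v, c * sqnorm v <= qform M v.
Proof.
move=> MT; set K := \sum_i \sum_j `|M i j|.
pose S := [set r : R | exists2 v, 0 < sqnorm v & r = qform M v / sqnorm v].
pose v1 : 'rV[R]_N.+1 := const_mx 1.
have S_neq0 : S !=set0.
  by exists (qform M v1 / sqnorm v1); exists v1; rewrite ?sqnorm_const1_gt0.
have S_lb : has_lbound S.
  exists (- K) => _ [v v_gt0 ->]; rewrite ler_pdivlMr // mulNr lerNl.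
  by have := norm_qform_le M v; rewrite -/K ler_norml => /andP[]; lra.
have M_ge v : inf S * sqnorm v <= qform M v.
  have [-> | v_neq0] := eqVneq v 0; first by rewrite sqnorm0 mulr0 qformv0.
  have v_gt0 := sqnorm_gt0 v_neq0.
  by rewrite -ler_pdivlMr //; apply: ge_inf => //; exists v.
exists (inf S) => //; apply: rayleigh_inf_eigenvalue => // e e_gt0.
have [_ [v v_gt0 ->] lt_ve] := inf_adherent e_gt0 (conj S_neq0 S_lb).
by exists v; rewrite // -ltr_pdivrMr.
Qed.

Lemma sigma_min_qform_le N (M : 'M[R]_N) v : M^T = M -> (forall v, 0 <= qform M v) ->
  sigma_min M * sqnorm v <= qform M v.
Proof.
case: N M v => [|N] M v MT M_psd; first by rewrite sqnormE big_ord0 mulr0.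
have [c /eigenvalueP [u uM u_neq0] M_ge] := sym_min_eigenvalue MT.
have c_ge0 : 0 <= c.
  by rewrite -(pmulr_lge0 _ (sqnorm_gt0 u_neq0)) -(qform_eigen uM).
have eig_c2 : eigenvalue (M^T *m M) (c ^+ 2).
  by apply/eigenvalueP; exists u; rewrite // MT mulmxA uM -scalemxAl uM scalerA.
have le_c2 : inf [set lam | eigenvalue (M^T *m M) lam] <= c ^+ 2.
  by apply: ge_inf => //; exists 0 => lam /gram_eigenvalue_ge0.
apply: le_trans (M_ge v); rewrite ler_wpM2r ?sqnorm_ge0 //.
by rewrite -(ger0_norm c_ge0) -sqrtr_sqr ler_sqrt ?sqr_ge0.
Qed.

Lemma sqnorm_mul_le a b (M : 'M[R]_(a, b)) (v : 'rV[R]_b) :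
  sqnorm (v *m M^T) <= sigma_max M ^+ 2 * sqnorm v.
Proof.
case: b M v => [|b] M v; first by rewrite [v]thinmx0 mul0mx !sqnorm0 mulr0.
set G := M^T *m M.
have GNT : (- G)^T = - G by rewrite linearN /= trmx_mul trmxK.
have [c /eigenvalueP [u uG u_neq0] G_ge] := sym_min_eigenvalue GNT.
have eig_Nc : eigenvalue G (- c).
  by apply/eigenvalueP; exists u; rewrite // scaleNr -uG mulmxN opprK.
set E := [set lam | eigenvalue G lam].
have le_sup : - c <= sup E.
  apply: sup_upper_bound; last exact: eig_Nc.
  split; first by exists (- c).
  by exists (\sum_i \sum_j `|G i j|) => lam /eigenvalue_le_sum_norm.
have := G_ge v; rewrite /sigma_max -/G -/E qformN qform_gram sqr_sqrtr; last first.
  exact: le_trans (gram_eigenvalue_ge0 eig_Nc) le_sup.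
rewrite lerNr -mulNr => /le_trans; apply.
by rewrite ler_wpM2r ?sqnorm_ge0.
Qed.

Lemma sigma_min_le1 N (M : 'M[R]_N) : M^T = M -> (forall v, 0 <= qform M v) ->
  (forall v, qform M v <= sqnorm v) -> sigma_min M <= 1.
Proof.
case: N M => [|N] M MT M_psd M_le.
  rewrite /sigma_min (_ : [set _ | _] = set0) ?inf0 ?sqrtr0 ?ler01 //.
  by apply/seteqP; split => lam //=; rewrite /eigenvalue [eigenspace _ _]flatmx0 eqxx.
have := le_trans (sigma_min_qform_le (const_mx 1) MT M_psd) (M_le _).
by rewrite -[leRHS]mul1r ler_pM2r // sqnorm_const1_gt0.
Qed.

Lemma frob2_mul_le a b c (M : 'M[R]_(a, b)) (e : 'M[R]_(b, c)) :
  frob2 (M *m e) <= sigma_max M ^+ 2 * frob2 e.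
Proof.
rewrite !frob2_cols mulr_sumr; apply: ler_sum => j _.
by rewrite trmx_mul row_mul sqnorm_mul_le.
Qed.

End SingularValues.

Section OrdSub.
Local Open Scope nat_scope.
Variable p : nat.
Implicit Types i j k r : 'I_p.

Lemma ord_subK i j : (ord_sub i j + j) %% p = i.
Proof.
rewrite /= modnDml subnK ?modnDr ?modn_small //.
exact: leq_trans (ltnW (ltn_ord j)) (leq_addl i p).
Qed.

Lemma ord_sub_unique i j r : (r + j) %% p = i -> r = ord_sub i j.
Proof.
move=> rji; apply: val_inj => /=.
have /eqP : (r + j) %% p = (ord_sub i j + j) %% p by rewrite ord_subK.
rewrite eqn_modDr (modn_small (ltn_ord r)).
by rewrite (modn_small (ltn_ord (ord_sub i j))) => /eqP.
Qed.

Lemma ord_sub_sub i j k : ord_sub (ord_sub i j) (ord_sub k j) = ord_sub i k.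
Proof.
symmetry; apply: ord_sub_unique; rewrite -[RHS](modn_small (ltn_ord _)).
by apply/eqP; rewrite -(eqn_modDr j) -addnA -modnDmr !ord_subK.
Qed.

Lemma ord_subl_inj j : injective (fun k => ord_sub k j).
Proof.
by move=> k k' /= kk'; apply: val_inj; rewrite /= -(ord_subK k j) kk' ord_subK.
Qed.

Lemma ord_neg_sub i j : ord_neg (ord_sub i j) = ord_sub j i.
Proof.
rewrite -(ord_sub_sub j j i).
by apply: val_inj => /=; rewrite addKn modnn add0n.
Qed.

Lemma ord_sub_eq0 i j : (ord_sub i j == 0 :> nat) = (i == j).
Proof.
apply/eqP/eqP => [ij0 | ->]; last by rewrite /= addKn modnn.
by apply: val_inj; rewrite /= -(ord_subK i j) ij0 add0n modn_small.
Qed.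

End OrdSub.

Section BlockCirculant.
Variable R : realType.

Lemma tfoldK n l p : cancel (@tfold R n l p) (@tunfold R n l p).
Proof. exact: submxcolK. Qed.

Lemma tunfold_tprod m n l p (U : tensor R m n p) (V : tensor R n l p) :
  tunfold (tprod U V) = bcirc U *m tunfold V.
Proof. exact: tfoldK. Qed.

Lemma tunfoldB n l p (X Y : tensor R n l p) :
  tunfold (tsub X Y) = tunfold X - tunfold Y.
Proof. exact: mxcolB. Qed.

Lemma tprod_slice m n l p (U : tensor R m n p) (V : tensor R n l p) r :
  tprod U V r = \sum_j U (ord_sub r j) *m V j.
Proof. by rewrite /tprod /tfold /bcirc /tunfold mul_mxblock_mxrow mxcolK. Qed.

Lemma bcirc_tprod m n l p (U : tensor R m n p) (V : tensor R n l p) :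
  bcirc (tprod U V) = bcirc U *m bcirc V.
Proof.
rewrite {2 3}/bcirc mul_mxblock /bcirc; apply: eq_mxblock => i k.
rewrite tprod_slice (reindex_inj (@ord_subl_inj _ k)) /=.
by apply: eq_bigr => j _; rewrite ord_sub_sub.
Qed.

Lemma bcirc_tstar m n p (U : tensor R m n p) : bcirc (tstar U) = (bcirc U)^T.
Proof.
by rewrite /bcirc tr_mxblock; apply: eq_mxblock => i j; rewrite /tstar ord_neg_sub.
Qed.

Lemma bcirc_tid n p : bcirc (tid R n (p := p)) = 1%:M.
Proof.
rewrite -(mxdiagZ (p_ := fun _ : 'I_p => n) 1) /bcirc /mxdiag.
apply: eq_mxblock => i j; rewrite /tid ord_sub_eq0.
by case: eqP => // _; rewrite conform_mx_id.
Qed.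

Lemma bcirc_mul_tE m n p (A : tensor R m n p) tau :
  bcirc A *m bcirc (tE R (p := p) tau) = bcirc (tcols A tau).
Proof.
rewrite {1 2}/bcirc mul_mxblock /bcirc; apply: eq_mxblock => i k.
rewrite (bigD1 k) //= big1 ?addr0 => [|j /negbTE jk].
  by rewrite /tE ord_sub_eq0 eqxx /tcols mulmx_colsub mulmx1.
by rewrite /tE ord_sub_eq0 jk mulmx0.
Qed.

Lemma tfro_sqr m n p (X : tensor R m n p) : tfro X ^+ 2 = frob2 (tunfold X).
Proof.
rewrite /tfro sqr_sqrtr; last by do 3 (apply: sumr_ge0 => ? _); apply: sqr_ge0.
rewrite /frob2 /tunfold tr_mxcol mul_mxrow_mxcol raddf_sum /=.
by apply: eq_bigr => k _; rewrite -/(frob2 (X k)) frob2E.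
Qed.

Lemma tinvP n p (G : tensor R n n p) : tinvertible G -> is_tinv G (tinv G).
Proof. by rewrite /tinv; case: pselect => // H _; apply: (projT2 (cid H)). Qed.

End BlockCirculant.

Section PseudoInverse.
Variable R : realType.

Lemma gram_unitmx a b c (M : 'M[R]_(a, b)) :
  (forall y : 'M[R]_(b, c.+1), M *m y = 0 -> y = 0) -> M^T *m M \in unitmx.
Proof.
move=> M_inj; rewrite -row_free_unit; apply: inj_row_free => v vG.
have /sqnorm_eq0 vM : sqnorm (v *m M^T) = 0.
  by rewrite -qform_gram /qform /bform vG mul0mx mxE.
have Mv : M *m v^T = 0 by rewrite -[M]trmxK -trmx_mul vM trmx0.
have : M *m (v^T *m delta_mx 0 (ord0 : 'I_c.+1)) = 0 by rewrite mulmxA Mv mul0mx.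
move/M_inj/matrixP => v0; apply/rowP => i; have := v0 i ord0.
by rewrite !mxE big_ord1 !mxE !eqxx mulr1.
Qed.

Lemma gram_is_mp_pinv a b (M : 'M[R]_(a, b)) : M^T *m M \in unitmx ->
  is_mp_pinv M (invmx (M^T *m M) *m M^T).
Proof.
move=> Gu; have GT : (M^T *m M)^T = M^T *m M by rewrite trmx_mul trmxK.
split.
- by rewrite -!mulmxA mulVmx // mulmx1.
- by rewrite -(mulmxA (invmx _) M^T M) mulVmx // mul1mx.
- by rewrite !trmx_mul trmxK trmx_inv GT !mulmxA.
- by rewrite -mulmxA mulVmx // trmx1.
Qed.

Lemma mp_pinvP a b (M : 'M[R]_(a, b)) X : is_mp_pinv M X -> is_mp_pinv M (mp_pinv M).
Proof.
move=> MX; rewrite /mp_pinv; case: pselect => [H | []]; last by exists X.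
exact: (projT2 (cid H)).
Qed.

Lemma frob2_le_pinv a b c (M : 'M[R]_(a, b)) :
  (forall y : 'M[R]_(b, c), M *m y = 0 -> y = 0) ->
  forall d : 'M[R]_(b, c), frob2 d <= sigma_max (mp_pinv M) ^+ 2 * frob2 (M *m d).
Proof.
case: c => [|c] M_inj d.
  by rewrite frob2_cols big_ord0 mulr_ge0 ?sqr_ge0 ?frob2_ge0.
have [MXM _ _ _] := mp_pinvP (gram_is_mp_pinv (gram_unitmx M_inj)).
suff {1}<- : mp_pinv M *m (M *m d) = d by apply: frob2_mul_le.
by apply/eqP; rewrite -subr_eq0; apply/eqP/M_inj; rewrite mulmxBr !mulmxA MXM subrr.
Qed.

End PseudoInverse.

Section IidExpectation.
Variables (R : realType) (n : nat) (T : {set {set 'I_n}}) (D : {set 'I_n} -> R).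
Hypothesis D_ge0 : forall tau, tau \in T -> 0 <= D tau.

Lemma iid_expect0 f : iid_expect T D 0 f = f [::].
Proof.
rewrite /iid_expect (big_pred1 [tuple]) => [|t]; last by rewrite [t]tuple0 /= eqxx.
by rewrite big_nil mul1r.
Qed.

Lemma iid_expectS k f : iid_expect T D k.+1 f =
  \sum_(tau in T) D tau * iid_expect T D k (fun s => f (tau :: s)).
Proof.
rewrite /iid_expect.
pose cons_t (q : {set 'I_n} * k.-tuple {set 'I_n}) := [tuple of q.1 :: q.2].
have cons_bij : bijective cons_t.
  exists (fun t => (thead t, [tuple of behead t])) => [[x t] | t].
    by rewrite /cons_t /= theadE; congr pair; apply: val_inj.
  by rewrite /cons_t /= [RHS]tuple_eta.
rewrite (reindex cons_t) /=; last exact: onW_bij.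
rewrite -(pair_big_dep (mem T) (fun _ (t : k.-tuple _) => all (mem T) t)
  (fun x t => (\prod_(tau <- cons_t (x, t)) D tau) * f (cons_t (x, t)))) /=.
apply: eq_bigr => x xT; rewrite mulr_sumr; apply: eq_bigr => t _.
by rewrite big_cons mulrA.
Qed.

Lemma iid_expect_le k f g : (forall s, f s <= g s) ->
  iid_expect T D k f <= iid_expect T D k g.
Proof.
move=> fg; apply: ler_sum => t /allP tT; apply: ler_wpM2l => //.
by rewrite big_seq prodr_ge0 // => tau /tT; apply: D_ge0.
Qed.

Lemma iid_expectZ k c f : iid_expect T D k (fun s => c * f s) = c * iid_expect T D k f.
Proof. by rewrite /iid_expect mulr_sumr; apply: eq_bigr => t _; rewrite mulrCA. Qed.

End IidExpectation.

Section GramProjection.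
Variable R : realFieldType.

Lemma block_step_residual a b c t (M : 'M[R]_(a, b)) (E : 'M[R]_(b, t)) (G : 'M[R]_t)
    (x y : 'M[R]_(b, c)) (g : 'M[R]_(a, c)) :
  M^T *m (M *m y - g) = 0 ->
  M *m (x - E *m (G *m ((M *m E)^T *m (M *m x - g)))) - M *m y
   = (M *m x - M *m y) - (M *m E) *m (G *m (M *m E)^T) *m (M *m x - M *m y).
Proof.
move=> normal_y; set N := M *m E.
have N_res : N^T *m (M *m y - g) = 0 by rewrite trmx_mul -mulmxA normal_y mulmx0.
have -> : M *m x - g = (M *m x - M *m y) + (M *m y - g) by rewrite addrA subrK.
by rewrite mulmxDr N_res addr0 mulmxBr !mulmxA addrAC.
Qed.

Variables (a t : nat) (N : 'M[R]_(a, t)) (G : 'M[R]_t).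
Hypothesis G_inv : G *m (N^T *m N) = 1%:M.

Lemma gram_proj_tr : (N *m (G *m N^T))^T = N *m (G *m N^T).
Proof.
have [_ Gu] := mulmx1_unit G_inv.
have -> : G = invmx (N^T *m N) by rewrite -[G]mulmx1 -(mulmxV Gu) mulmxA G_inv mul1mx.
by rewrite !trmx_mul trmxK trmx_inv trmx_mul trmxK mulmxA.
Qed.

Lemma gram_proj_idem : N *m (G *m N^T) *m (N *m (G *m N^T)) = N *m (G *m N^T).
Proof. by rewrite !mulmxA -(mulmxA (N *m G) N^T N) -(mulmxA N G) G_inv mulmx1. Qed.

End GramProjection.

Section Trbgs.
Variables (R : realType) (m n l p : nat) (A : tensor R m n p) (B : tensor R m l p).
Variables (T : {set {set 'I_n}}) (D : {set 'I_n} -> R) (Xd : tensor R n l p).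
Hypothesis D_ge0 : forall tau, tau \in T -> 0 <= D tau.
Hypothesis D_sum1 : \sum_(tau in T) D tau = 1.
Hypothesis gram_inv : forall tau, tau \in T ->
  tinvertible (tprod (tstar (tcols A tau)) (tcols A tau)).
Hypothesis Xd_min : forall Y : tensor R n l p,
  tfro (tsub (tprod A Xd) B) ^+ 2 <= tfro (tsub (tprod A Y) B) ^+ 2.

Local Notation Am := (bcirc A).
Local Notation xd := (tunfold Xd).
Local Notation At tau := (bcirc (tcols A tau)).
Local Notation Gi tau := (bcirc (tinv (tprod (tstar (tcols A tau)) (tcols A tau)))).
Local Notation P tau := (bcirc (tproj A tau)).
Local Notation EP := (\sum_(tau in T) D tau *: P tau).

Lemma bcirc_tproj tau : P tau = At tau *m (Gi tau *m (At tau)^T).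
Proof. by rewrite /tproj !bcirc_tprod bcirc_tstar. Qed.

Lemma bcirc_gram_inv tau : tau \in T -> Gi tau *m ((At tau)^T *m At tau) = 1%:M.
Proof.
move=> /gram_inv/tinvP [_ /(congr1 (@bcirc R _ _ p))].
by rewrite bcirc_tid !bcirc_tprod bcirc_tstar.
Qed.

Lemma bcirc_tproj_tr tau : tau \in T -> (P tau)^T = P tau.
Proof. by move=> /bcirc_gram_inv; rewrite bcirc_tproj; apply: gram_proj_tr. Qed.

Lemma bcirc_tproj_idem tau : tau \in T -> P tau *m P tau = P tau.
Proof. by move=> /bcirc_gram_inv; rewrite bcirc_tproj; apply: gram_proj_idem. Qed.

Lemma Xd_normal : Am^T *m (Am *m xd - tunfold B) = 0.
Proof.
apply: normal_equation => z; have := Xd_min (tfold z).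
by rewrite !tfro_sqr !tunfoldB !tunfold_tprod tfoldK.
Qed.

Definition residual_err (X : tensor R n l p) := frob2 (Am *m tunfold X - Am *m xd).

Lemma residual_errE X : tfro (tsub (tprod A X) (tprod A Xd)) ^+ 2 = residual_err X.
Proof. by rewrite tfro_sqr tunfoldB !tunfold_tprod. Qed.

Lemma trbgs_step_residual X tau :
  Am *m tunfold (trbgs_step A B X tau) - Am *m xd =
  (Am *m tunfold X - Am *m xd) - P tau *m (Am *m tunfold X - Am *m xd).
Proof.
rewrite /trbgs_step tunfoldB !tunfold_tprod bcirc_tstar tunfoldB tunfold_tprod.
by rewrite bcirc_tproj -bcirc_mul_tE; apply: block_step_residual Xd_normal.
Qed.

Lemma expected_proj_tr : EP^T = EP.
Proof.
rewrite linear_sum; apply: eq_bigr => tau tauT.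
by rewrite linearZ /= bcirc_tproj_tr.
Qed.

Lemma expected_proj_psd v : 0 <= qform EP v.
Proof.
rewrite qform_sum; apply: sumr_ge0 => tau tauT.
by rewrite mulr_ge0 ?D_ge0 ?proj_qform_ge0 ?bcirc_tproj_tr ?bcirc_tproj_idem.
Qed.

Lemma expected_proj_le v : qform EP v <= sqnorm v.
Proof.
rewrite qform_sum -[leRHS]mul1r -D_sum1 mulr_suml; apply: ler_sum => tau tauT.
by rewrite ler_wpM2l ?D_ge0 ?proj_qform_le ?bcirc_tproj_tr ?bcirc_tproj_idem.
Qed.

Lemma alphaA_ge0 : 0 <= alphaA A T D.
Proof.
rewrite subr_ge0 sigma_min_le1 ?expected_proj_tr //.
  exact: expected_proj_psd.
exact: expected_proj_le.
Qed.

Lemma expected_step_le X :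
  \sum_(tau in T) D tau * residual_err (trbgs_step A B X tau) <=
  alphaA A T D * residual_err X.
Proof.
set e := Am *m tunfold X - Am *m xd.
have stepE tau : tau \in T ->
    residual_err (trbgs_step A B X tau) = frob2 e - \tr (e^T *m P tau *m e).
  move=> tauT; rewrite /residual_err trbgs_step_residual.
  by rewrite frob2_sub_proj ?bcirc_tproj_tr ?bcirc_tproj_idem.
have trEP : \tr (e^T *m EP *m e) = \sum_(tau in T) D tau * \tr (e^T *m P tau *m e).
  rewrite trace_qform_cols; under eq_bigr do rewrite qform_sum.
  by rewrite exchange_big; apply: eq_bigr => tau _; rewrite trace_qform_cols mulr_sumr.
have EP_ge v : sigma_min EP * sqnorm v <= qform EP v.
  exact: sigma_min_qform_le expected_proj_tr expected_proj_psd.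
have -> : \sum_(tau in T) D tau * residual_err (trbgs_step A B X tau) =
          frob2 e - \tr (e^T *m EP *m e).
  rewrite trEP -[frob2 e]mul1r -D_sum1 mulr_suml -sumrB.
  by apply: eq_bigr => tau tauT; rewrite stepE // mulrBr.
by rewrite /alphaA mulrBl mul1r lerD2l lerN2 trace_qform_ge.
Qed.

Lemma expected_residual_err_le k X0 :
  iid_expect T D k (fun s => residual_err (trbgs_iter A B X0 s)) <=
  alphaA A T D ^+ k * residual_err X0.
Proof.
elim: k X0 => [|k IH] X0; first by rewrite iid_expect0 expr0 mul1r.
rewrite iid_expectS exprSr -mulrA.
apply: le_trans (ler_wpM2l (exprn_ge0 k alphaA_ge0) (expected_step_le X0)).
rewrite mulr_sumr; apply: ler_sum => tau tauT.
by rewrite mulrCA ler_wpM2l ?D_ge0 ?IH.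
Qed.

Lemma bcirc_mul_eq0 (Xd_uniq : forall Y, tprod A Y = tprod A Xd -> Y = Xd)
    (y : 'M[R]_(\sum_(i < p) n, l)) :
  Am *m y = 0 -> y = 0.
Proof.
move=> Ay; have AyXd : tprod A (tfold (xd + y)) = tprod A Xd.
  by rewrite /tprod tfoldK mulmxDr Ay addr0.
have := congr1 (@tunfold R n l p) (Xd_uniq _ AyXd); rewrite tfoldK => xdy.
by rewrite -(addKr xd y) xdy addNr.
Qed.

Lemma expected_err_le (Xd_uniq : forall Y, tprod A Y = tprod A Xd -> Y = Xd) k X0 :
  iid_expect T D k (fun s => tfro (tsub (trbgs_iter A B X0 s) Xd) ^+ 2)
  <= kappa2 A * alphaA A T D ^+ k * tfro (tsub X0 Xd) ^+ 2.
Proof.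
set sd := sigma_max (mp_pinv Am).
apply: (@le_trans _ _
  (iid_expect T D k (fun s => sd ^+ 2 * residual_err (trbgs_iter A B X0 s)))).
  apply: iid_expect_le => // s.
  rewrite tfro_sqr tunfoldB /residual_err -mulmxBr.
  exact: frob2_le_pinv (bcirc_mul_eq0 Xd_uniq) _.
rewrite iid_expectZ.
apply: le_trans (ler_wpM2l (sqr_ge0 _) (expected_residual_err_le k X0)) _.
rewrite /residual_err -mulmxBr tfro_sqr tunfoldB /kappa2 -/sd.
rewrite [leRHS](_ : _ = sd ^+ 2 * (alphaA A T D ^+ k *
  (sigma_max Am ^+ 2 * frob2 (tunfold X0 - xd)))); last by ring.
by rewrite ler_wpM2l ?sqr_ge0 // ler_wpM2l ?exprn_ge0 ?alphaA_ge0 ?frob2_mul_le.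
Qed.

End Trbgs.

Theorem theorem1 (R : realType) (m n l p : nat)
  (A : tensor R m n p) (B : tensor R m l p)
  (T : {set {set 'I_n}}) (D : {set 'I_n} -> R)
  (HD0 : forall tau, tau \in T -> 0 <= D tau)
  (HD1 : \sum_(tau in T) D tau = 1)
  (Hinv : forall tau, tau \in T ->
            tinvertible (tprod (tstar (tcols A tau)) (tcols A tau)))
  (X0 Xd : tensor R n l p)
  (Hmin : forall Y : tensor R n l p,
            tfro (tsub (tprod A Xd) B) ^+ 2 <= tfro (tsub (tprod A Y) B) ^+ 2) :
  (forall k : nat,
     iid_expect T D k
       (fun s => tfro (tsub (tprod A (trbgs_iter A B X0 s)) (tprod A Xd)) ^+ 2)
     <= alphaA A T D ^+ k * tfro (tsub (tprod A X0) (tprod A Xd)) ^+ 2)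
  /\
  ((forall Y : tensor R n l p, tprod A Y = tprod A Xd -> Y = Xd) ->
   forall k : nat,
     iid_expect T D k (fun s => tfro (tsub (trbgs_iter A B X0 s) Xd) ^+ 2)
     <= kappa2 A * alphaA A T D ^+ k * tfro (tsub X0 Xd) ^+ 2).
Proof.
split => [k | Xd_uniq k]; last exact: expected_err_le.
rewrite residual_errE; apply: le_trans (expected_residual_err_le HD0 HD1 Hinv Hmin k X0).
by apply: iid_expect_le => // s; rewrite residual_errE.
Qed.
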